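(* Let $m,n\geq 2$. There exists a $\mathrm{M}^0_{\mathbb Z_{mn+1}^*}(m,n;n,m)$ (an $m\times n$ array with no empty cells) if and only if $mn+1$ is odd and $mn+1>5$.
   Context: For an abelian group $\Gamma$ and $\Omega\subseteq\Gamma$, a zero-sum magic partially filled array $\mathrm{M}^0_\Omega(m,n;s,k)$ is an $m\times n$ array, some cells of which may be empty, with entries in $\Omega$ in which every element of $\Omega$ appears exactly once, each row has exactly $s$ and each column exactly $k$ filled cells, and all row and column sums equal $0_\Gamma$. $\mathbb Z_N$ is the cyclic group of order $N$ and $\mathbb Z_N^*=\mathbb Z_N\setminus\{0\}$. *)

From HB Require Import structures.
From mathcomp Require Import all_boot all_order all_algebra.
Set Implicit Arguments. Unset Strict Implicit. Unset Printing Implicit Defensive.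
Import GRing.Theory.
Local Open Scope ring_scope.

(* A partially filled m x n array over a (finite) abelian group G:
   cell (i,j) is [None] if empty, [Some x] if it contains x. *)

Definition zero_sum_magic_pfa (G : finZmodType) (Omega : {set G})
    (m n s k : nat) (A : 'M[option G]_(m, n)) : Prop :=
  (forall i j x, A i j = Some x -> x \in Omega) /\
  (forall x, x \in Omega -> #|[set p : 'I_m * 'I_n | A p.1 p.2 == Some x]| = 1%N) /\
  (forall i, #|[set j | A i j != None]| = s) /\
  (forall j, #|[set i | A i j != None]| = k) /\
  (forall i, \sum_(j < n) odflt 0 (A i j) = 0) /\
  (forall j, \sum_(i < m) odflt 0 (A i j) = 0).

Definition Zstar (N : nat) : {set 'Z_N} := [set x | x != 0].

(* Necessity: the cells of such an array carry the nonzero residues mod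
   N = mn + 1, each once, so the row sums give \sum_(x : 'Z_N) x = 0; but this
   sum is N(N - 1)/2, which is nonzero mod N for even N.  For mn = 4 the two
   off-diagonal entries of the 2 x 2 array would be equal.

   Sufficiency: it is enough to build an m x n integer array whose entries are
   +-1, ..., +-mn/2, each once, with all row and column sums divisible by N;
   its reduction mod N enumerates Z_N^* because all magnitudes are below N/2.
   Up to transposition the number of rows is even (or n = 2), and the array is
   glued from blocks on consecutive ranges of magnitudes.  The basic block is a
   row s of signed consecutive integers with sum 0 or N stacked on -s: runs
   a - (a+1) - (a+2) + (a+3) fill any width divisible by 4, a run ending with
   the two largest magnitudes (sum N) gives two more columns, and an odd number
   of columns is completed by a 3-column block with zero row and column sums. *)

From HB Require Import structures.
From mathcomp Require Import all_boot all_order all_algebra.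
From mathcomp Require Import zify.
Set Implicit Arguments. Unset Strict Implicit. Unset Printing Implicit Defensive.
Import GRing.Theory Num.Theory.
Local Open Scope ring_scope.

Definition mx_inj (R : eqType) m n (A : 'M[R]_(m, n)) : Prop :=
  injective (fun p : 'I_m * 'I_n => A p.1 p.2).

Lemma mx_inj_tr (R : eqType) m n (A : 'M[R]_(m, n)) : mx_inj A -> mx_inj A^T.
Proof. by move=> injA [j i] [j' i'] /=; rewrite !mxE => /(injA (i, j) (i', j')) [-> ->]. Qed.

Lemma mx_inj_col_mx (R : eqType) m1 m2 n (A : 'M[R]_(m1, n)) (B : 'M[R]_(m2, n)) :
  mx_inj A -> mx_inj B -> (forall i j i' j', A i j != B i' j') -> mx_inj (col_mx A B).
Proof.
move=> injA injB AB [i j] [i' j'] /=.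
case: (split_ordP i) => [k ->|k ->]; case: (split_ordP i') => [k' ->|k' ->];
  rewrite ?col_mxEu ?col_mxEd.
- by move/(injA (k, j) (k', j')) => [-> ->].
- by move/eqP; rewrite (negbTE (AB _ _ _ _)).
- by move/esym/eqP; rewrite (negbTE (AB _ _ _ _)).
- by move/(injB (k, j) (k', j')) => [-> ->].
Qed.

Lemma mx_inj_row_mx (R : eqType) m n1 n2 (A : 'M[R]_(m, n1)) (B : 'M[R]_(m, n2)) :
  mx_inj A -> mx_inj B -> (forall i j i' j', A i j != B i' j') -> mx_inj (row_mx A B).
Proof.
move=> injA injB AB; rewrite -[row_mx A B]trmxK tr_row_mx; apply/mx_inj_tr.
by apply: mx_inj_col_mx; [exact: mx_inj_tr | exact: mx_inj_tr | move=> *; rewrite !mxE].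
Qed.

Definition magic_block (N lo hi : nat) m n (A : 'M[int]_(m, n)) : Prop :=
  [/\ forall i j, (lo < `|A i j| <= hi)%N, mx_inj A,
      forall i, (N %| \sum_j A i j)%Z & forall j, (N %| \sum_i A i j)%Z].

Lemma magic_block_tr N lo hi m n (A : 'M[int]_(m, n)) :
  magic_block N lo hi A -> magic_block N lo hi A^T.
Proof.
case=> rA injA rowA colA; split.
- by move=> j i; rewrite mxE.
- exact: mx_inj_tr.
- by move=> j; under eq_bigr do rewrite mxE.
- by move=> i; under eq_bigr do rewrite mxE.
Qed.

Lemma magic_block_row_mx N lo mid hi m n1 n2 (A : 'M[int]_(m, n1)) (B : 'M[int]_(m, n2)) :
  (lo <= mid <= hi)%N -> magic_block N lo mid A -> magic_block N mid hi B ->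
  magic_block N lo hi (row_mx A B).
Proof.
move=> /andP [lo_mid mid_hi] [rA injA rowA colA] [rB injB rowB colB]; split.
- move=> i j; case: (split_ordP j) => [k ->|k ->]; rewrite ?row_mxEl ?row_mxEr.
    by have := rA i k; lia.
  by have := rB i k; lia.
- apply: mx_inj_row_mx => // i j i' j'; apply/eqP => eAB.
  have : `|A i j|%N = `|B i' j'|%N by rewrite eAB.
  by move: (rA i j) (rB i' j'); lia.
- by move=> i; rewrite big_split_ord /=; under eq_bigr do rewrite row_mxEl;
    under [X in _ + X]eq_bigr do rewrite row_mxEr; exact: rpredD.
- move=> j; case: (split_ordP j) => [k ->|k ->].
    by under eq_bigr do rewrite row_mxEl.
  by under eq_bigr do rewrite row_mxEr.
Qed.

Lemma magic_block_col_mx N lo mid hi m1 m2 n (A : 'M[int]_(m1, n)) (B : 'M[int]_(m2, n)) :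
  (lo <= mid <= hi)%N -> magic_block N lo mid A -> magic_block N mid hi B ->
  magic_block N lo hi (col_mx A B).
Proof.
move=> bounds /magic_block_tr bA /magic_block_tr bB.
by rewrite -[col_mx A B]trmxK tr_col_mx; apply/magic_block_tr/(magic_block_row_mx bounds).
Qed.

Lemma magic_block_row_opp (N lo : nat) (s : seq int) :
  map absz s = iota lo.+1 (size s) -> (N %| \sum_(x <- s) x)%Z ->
  magic_block N lo (lo + size s) (col_mx (\row_(j < size s) s`_j) (- \row_j s`_j)).
Proof.
move=> absE sumN.
have abs_s (j : 'I_(size s)) : absz s`_j = (lo + j).+1.
  by rewrite -(nth_map 0 0) // absE nth_iota // addSn.
split.
- move=> i j; have := ltn_ord j.
  by case: (split_ordP i) => [k ->|k ->]; rewrite ?col_mxEu ?col_mxEd !mxE ?abszN abs_s; lia.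
- apply: mx_inj_col_mx.
  + move=> [i j] [i' j'] /=; rewrite !mxE !ord1 => /(congr1 absz).
    by rewrite !abs_s => /eqP; rewrite eqSS eqn_add2l => /eqP/val_inj ->.
  + move=> [i j] [i' j'] /=; rewrite !mxE !ord1 => /oppr_inj/(congr1 absz).
    by rewrite !abs_s => /eqP; rewrite eqSS eqn_add2l => /eqP/val_inj ->.
  + move=> i j i' j'; rewrite !mxE; apply/eqP => sE.
    have /val_inj ej : j = j' :> nat by have := congr1 absz sE; rewrite abszN !abs_s; lia.
    by move: sE; rewrite ej => /eqP; rewrite -addr_eq0 -mulr2n mulrn_eq0 -absz_eq0 abs_s.
- rewrite (big_nth 0) big_mkord in sumN.
  by move=> i; case: (split_ordP i) => [k ->|k ->];
    under eq_bigr do rewrite ?col_mxEu ?col_mxEd !mxE; rewrite ?sumrN ?rpredN.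
- by move=> j; rewrite big_split_ord /= !big_ord1 col_mxEu col_mxEd !mxE subrr rpred0.
Qed.

Lemma Zp_intr_eq0 N (z : int) : (1 < N)%N -> ((z%:~R : 'Z_N) == 0) = (N %| z)%Z.
Proof.
move=> N_gt1; have N0 : N%:Z != 0 by rewrite eqz_nat; lia.
have /gez0_abs zmodN := modz_ge0 z N0.
have lt_mod : (`|(z %% N)%Z|%N < N)%N by rewrite -ltz_nat zmodN ltz_mod.
rewrite {1}(divz_eq z N) intrD intrM -zmodN -!pmulrn.
rewrite (_ : N%:R = 0 :> 'Z_N); last by apply: val_inj; rewrite /= val_Zp_nat // modnn.
rewrite mulr0 add0r -(inj_eq val_inj) /= val_Zp_nat //.
by rewrite modn_small // -(eqz_nat _ 0) zmodN; apply/eqP/dvdz_mod0P.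
Qed.

Lemma card_Zstar N : (1 < N)%N -> #|Zstar N| = N.-1.
Proof.
move=> N_gt1; rewrite (_ : Zstar N = ~: [set 0]); last by apply/setP => x; rewrite !inE.
by rewrite cardsC1 card_ord Zp_cast.
Qed.

Lemma magic_block_pfa m n hi (A : 'M[int]_(m, n)) :
  (0 < m * n)%N -> (m * n = 2 * hi)%N -> magic_block (m * n + 1) 0 hi A ->
  exists B : 'M[option 'Z_(m * n + 1)]_(m, n),
    @zero_sum_magic_pfa _ (Zstar (m * n + 1)) m n n m B.
Proof.
move=> mn_gt0 mnE [rA injA rowA colA]; set N := (m * n + 1)%N.
have N_gt1 : (1 < N)%N by rewrite /N; lia.
pose g (p : 'I_m * 'I_n) : 'Z_N := (A p.1 p.2)%:~R.
have ndvdN z : (0 < `|z| < N)%N -> ~~ (N %| z)%Z.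
  by case/andP=> z_gt0 z_lt; rewrite dvdzE gtnNdvd.
have g_neq0 p : g p != 0.
  by rewrite Zp_intr_eq0 // ndvdN //; have := rA p.1 p.2; lia.
have g_inj : injective g.
  move=> p q /eqP; rewrite -subr_eq0 -intrB Zp_intr_eq0 //; apply: contraTeq => pq.
  have : A p.1 p.2 != A q.1 q.2 by apply: contra pq => /eqP/injA ->.
  rewrite -subr_eq0 -absz_gt0 => Apq; rewrite ndvdN // Apq /=.
  by have := rA p.1 p.2; have := rA q.1 q.2; rewrite /N; lia.
have gE : g @: setT = Zstar N.
  apply/eqP; rewrite eqEcard; apply/andP; split.
    by apply/subsetP => x /imsetP [p _ ->]; rewrite inE g_neq0.
  by rewrite card_Zstar // card_imset // cardsT card_prod !card_ord /N addn1.
exists (\matrix_(i, j) Some (g (i, j))).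
split; [|split; [|split; [|split; [|split]]]].
- by move=> i j x; rewrite mxE => -[<-]; rewrite -gE imset_f.
- move=> x; rewrite -gE => /imsetP [p _ ->].
  rewrite (_ : [set q | _] = [set p]) ?cards1 //; apply/setP => q.
  by rewrite !inE mxE (inj_eq Some_inj) (inj_eq g_inj); case: q.
- move=> i; rewrite (_ : [set j | _] = setT) ?cardsT ?card_ord //.
  by apply/setP => j; rewrite !inE mxE.
- move=> j; rewrite (_ : [set i | _] = setT) ?cardsT ?card_ord //.
  by apply/setP => i; rewrite !inE mxE.
- move=> i; under eq_bigr do rewrite mxE /=.
  by apply/eqP; rewrite /g -mulrz_sumr Zp_intr_eq0 //; apply: rowA.
- move=> j; under eq_bigr do rewrite mxE /=.
  by apply/eqP; rewrite /g -mulrz_sumr Zp_intr_eq0 //; apply: colA.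
Qed.

Fixpoint quad_run (a Q : nat) : seq int :=
  if Q is Q'.+1 then [:: a.+1%:Z; - a.+2%:Z; - a.+3%:Z; a.+4%:Z] ++ quad_run a.+4 Q' else [::].

Lemma quad_run_abs a Q : map absz (quad_run a Q) = iota a.+1 (4 * Q).
Proof. by elim: Q a => [|Q IHQ] a //; rewrite [map _ _]/= IHQ mulnS iotaD addn4. Qed.

Lemma size_quad_run a Q : size (quad_run a Q) = (4 * Q)%N.
Proof. by rewrite -(size_map absz) quad_run_abs size_iota. Qed.

Lemma sum_quad_run a Q : \sum_(x <- quad_run a Q) x = 0.
Proof. by elim: Q a => [|Q IHQ] a; rewrite ?big_nil //= !big_cons IHQ; lia. Qed.

Lemma quad_block N lo T Q :
  exists A : 'M[int]_(T.*2, 4 * Q), magic_block N lo (lo + T * (4 * Q)) A.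
Proof.
elim: T lo => [|T IHT] lo.
  by exists 0; split=> [[]|[[]]|[]|j]; rewrite ?big_ord0 ?rpred0.
have [A bA] := IHT (lo + 4 * Q)%N.
have := @magic_block_row_opp N lo (quad_run lo Q).
rewrite size_quad_run quad_run_abs sum_quad_run rpred0 => /(_ erefl isT) bQ.
exists (col_mx (col_mx (\row_j (quad_run lo Q)`_j) (- \row_j (quad_run lo Q)`_j)) A).
by apply: magic_block_col_mx bQ _; rewrite [(T.+1 * _)%N]mulSn addnA //; lia.
Qed.

(* Signed arrangement of lo+1, ..., lo+L whose sum is 0, or 2(lo+L)+1 when
   L = 1, 2 (mod 4), up to an extra lo when L is odd. *)
Definition signed_run (lo L : nat) : seq int :=
  let K := (lo + L)%N in let Q := (L %/ 4)%N in
  match (L %% 4)%N with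
  | 0 => quad_run lo Q
  | 1 => [:: lo.+1%:Z; - lo.+2%:Z; lo.+3%:Z] ++ quad_run lo.+3 Q.-1 ++ [:: K.-1%:Z; K%:Z]
  | 2 => [:: - lo.+1%:Z; lo.+2%:Z; - lo.+3%:Z; lo.+4%:Z] ++ quad_run lo.+4 Q.-1
           ++ [:: K.-1%:Z; K%:Z]
  | _ => [:: lo.+1%:Z; lo.+2%:Z; - lo.+3%:Z] ++ quad_run lo.+3 Q
  end.

Lemma signed_run_abs lo L : (2 < L)%N -> map absz (signed_run lo L) = iota lo.+1 L.
Proof.
move=> L_gt2; rewrite /signed_run; have Ldiv := divn_eq L 4.
have : (L %% 4 < 4)%N by rewrite ltn_mod.
set q := (L %/ 4)%N in Ldiv *.
case: (L %% 4)%N Ldiv => [|[|[|[|//]]]] LE _; rewrite ?map_cat quad_run_abs /=.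
- by congr iota; lia.
- rewrite -[in RHS](_ : 3 + 4 * q.-1 + 2 = L)%N; last by lia.
  rewrite (iotaD _ (3 + _)) (iotaD _ 3) /= addn3.
  by congr [:: _, _, _ & _ ++ _]; congr [:: _; _]; lia.
- rewrite -[in RHS](_ : 4 + 4 * q.-1 + 2 = L)%N; last by lia.
  rewrite (iotaD _ (4 + _)) (iotaD _ 4) /= addn4.
  by congr [:: _, _, _, _ & _ ++ _]; congr [:: _; _]; lia.
- rewrite -[in RHS](_ : 3 + 4 * q = L)%N; last by lia.
  by rewrite (iotaD _ 3) /= addn3.
Qed.

Lemma signed_run_sum lo L : (2 < L)%N -> (odd L -> lo = 0%N) ->
  ((2 * (lo + L)).+1 %| \sum_(x <- signed_run lo L) x)%Z.
Proof.
move=> L_gt2 oddL_lo; rewrite /signed_run; have Ldiv := divn_eq L 4.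
have : (L %% 4 < 4)%N by rewrite ltn_mod.
case: (L %% 4)%N Ldiv => [|[|[|[|//]]]] LE _; rewrite ?big_cat /= ?big_cons ?big_nil sum_quad_run.
- exact: rpred0.
- have -> : lo = 0%N by apply: oddL_lo; rewrite LE oddD oddM andbF.
  by rewrite (_ : _ + _ = (2 * (0 + L)).+1%:Z) ?dvdzz //; lia.
- by rewrite (_ : _ + _ = (2 * (lo + L)).+1%:Z) ?dvdzz //; lia.
- have -> : lo = 0%N by apply: oddL_lo; rewrite LE oddD oddM andbF.
  by rewrite (_ : _ + _ = 0) ?rpred0 //; lia.
Qed.

Lemma two_col_block lo L : (2 < L)%N -> (odd L -> lo = 0%N) ->
  exists A : 'M[int]_(L, 2), magic_block (2 * (lo + L)).+1 lo (lo + L) A.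
Proof.
move=> L_gt2 oddL_lo; have absE := signed_run_abs lo L_gt2.
have sizeE : size (signed_run lo L) = L by rewrite -(size_map absz) absE size_iota.
have := magic_block_row_opp _ (signed_run_sum L_gt2 oddL_lo).
rewrite sizeE => /(_ _ absE) /magic_block_tr bA.
by eexists; apply: bA.
Qed.

Lemma even_width_block lo T w : (1 < T)%N -> ~~ odd w ->
  exists A : 'M[int]_(T.*2, w), magic_block (2 * (lo + T * w)).+1 lo (lo + T * w) A.
Proof.
move=> T_gt1 even_w; set N := (2 * (lo + T * w)).+1.
have [q wE] : exists q, w = (4 * q)%N \/ w = (4 * q + 2)%N.
  by exists (w %/ 4)%N; move: even_w; rewrite {1}(divn_eq w 4); lia.
case: wE => wE; first by rewrite wE; apply: quad_block.
have [A bA] := quad_block N lo T q.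
have [B bB] := @two_col_block (lo + T * (4 * q)) T.*2 ltac:(lia) ltac:(by rewrite odd_double).
have hiE : (lo + T * (4 * q) + T.*2 = lo + T * w)%N by rewrite wE; lia.
rewrite hiE -/N in bB; rewrite wE; exists (row_mx A B).
by apply: magic_block_row_mx bA _; rewrite -?wE ?hiE //; lia.
Qed.

(* The 2T x 3 block on magnitudes 1..3T: row t of the upper half permutes
   (T - t, -(2T+1+t), T+1+2t), row t of the lower half permutes
   (-(T+1+t), -(1+t), T+2+2t).  The permutation depends on the class of t,
   which is the parity of t except for the two middle rows when T is odd;
   with this choice every column sums to 0. *)
Definition three_col_class (T t : nat) : nat :=
  (if odd T && (t == T./2) then 2 else if odd T && (t == T./2.+1) then 3 else odd t)%N.

Definition three_col_triple (T t : nat) (ty : bool) : seq int :=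
  if ty then [:: - (T + t).+1%:Z; - t.+1%:Z; (T + t.*2).+2%:Z]
  else [:: T%:Z - t%:Z; - (T.*2 + t).+1%:Z; (T + t.*2).+1%:Z].

Definition three_col_perm (cl : nat) (ty : bool) : seq nat :=
  match cl, ty with
  | 0, false => [:: 0; 1; 2] | 0, true => [:: 1; 2; 0]
  | 1, false => [:: 0; 2; 1] | 1, true => [:: 1; 0; 2]
  | 2, _ => [:: 2; 0; 1]
  | _, false => [:: 1; 2; 0] | _, true => [:: 0; 1; 2]
  end%N.

Definition three_col_pair (T cl t j : nat) : int :=
  (three_col_triple T t false)`_(nth 0 (three_col_perm cl false) j) +
  (three_col_triple T t true)`_(nth 0 (three_col_perm cl true) j).

Lemma three_col_parity_sum T V j : (j < 3)%N ->
  \sum_(t < V.*2) three_col_pair T (odd t) t j =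
    if j == 0%N then (2 * V)%:Z * (T%:Z - (2 * V)%:Z) else V%:Z * ((2 * V)%:Z - T%:Z).
Proof.
move=> j_lt3; elim: V => [|V IHV]; first by rewrite big_ord0; case: ifP => _; lia.
case: j j_lt3 IHV => [|[|[|//]]] _ IHV;
  by rewrite doubleS !big_ord_recr IHV /= odd_double /three_col_pair /=; lia.
Qed.

Lemma sum_ord_two_points n a (F G : nat -> int) : (a.+1 < n)%N ->
  (forall t, t != a -> t != a.+1 -> F t = G t) ->
  \sum_(t < n) F t = \sum_(t < n) G t + (F a - G a) + (F a.+1 - G a.+1).
Proof.
move=> a1_lt FG; rewrite -addrA -[LHS](subrK (\sum_(t < n) G t)) addrC -sumrB; congr (_ + _).
rewrite (bigD1 (Ordinal (ltnW a1_lt))) // (bigD1 (Ordinal a1_lt)) ?neq_ltn ?ltnSn ?orbT //=.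
by rewrite big1 ?addr0 // => t /andP [ta ta1]; rewrite FG ?subrr.
Qed.

Lemma three_col_colsum T j : (1 < T)%N -> (j < 3)%N ->
  \sum_(t < T) three_col_pair T (three_col_class T t) t j = 0.
Proof.
move=> T_gt1 j_lt3.
have [V TE] : exists V, T = V.*2 \/ T = V.*2.+1 by exists T./2; lia.
case: TE => TE.
  have classE t : three_col_class T t = odd t by rewrite /three_col_class TE odd_double.
  under eq_bigr do rewrite classE.
  by rewrite TE three_col_parity_sum //; case: ifP => _; lia.
have V_gt0 : (0 < V)%N by lia.
have classE t : three_col_class T t = if t == V then 2%N else if t == V.+1 then 3%N else odd t.
  by rewrite /three_col_class TE /= odd_double /= uphalf_double.
rewrite (sum_ord_two_points (a := V) (F := fun t => three_col_pair T (three_col_class T t) t j)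
    (G := fun t => three_col_pair T (odd t) t j)); first last.
- by move=> t /negbTE tV /negbTE tV1; rewrite classE tV tV1.
- by rewrite TE; lia.
rewrite !classE eqxx (gtn_eqF (ltnSn V)) eqxx TE big_ord_recr /= three_col_parity_sum // odd_double.
by case: j j_lt3 => [|[|[|//]]] _; case: (odd V); rewrite /three_col_pair /=; lia.
Qed.

Lemma three_col_perm_lt cl ty j : (j < 3)%N -> (nth 0 (three_col_perm cl ty) j < 3)%N.
Proof. by case: cl => [|[|[|cl]]]; case: ty; case: j => [|[|[|j]]]. Qed.

Lemma three_col_perm_inj cl ty j j' : (j < 3)%N -> (j' < 3)%N ->
  nth 0 (three_col_perm cl ty) j = nth 0 (three_col_perm cl ty) j' -> j = j'.
Proof.
by case: cl => [|[|[|cl]]]; case: ty; case: j => [|[|[|j]]]; case: j' => [|[|[|j']]].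
Qed.

Definition three_col_entry (T : nat) (ty : bool) (t j : nat) : int :=
  (three_col_triple T t ty)`_(nth 0 (three_col_perm (three_col_class T t) ty) j).

Lemma three_col_entry_bound T ty t j : (t < T)%N -> (j < 3)%N ->
  (0 < `|three_col_entry T ty t j| <= 3 * T)%N.
Proof.
move=> t_lt /(@three_col_perm_lt (three_col_class T t) ty _); rewrite /three_col_entry.
by case: (nth _ _ j) => [|[|[|//]]] _; case: ty => /=; lia.
Qed.

Lemma three_col_entry_inj T ty ty' t t' j j' : (t < T)%N -> (t' < T)%N -> (j < 3)%N -> (j' < 3)%N ->
  three_col_entry T ty t j = three_col_entry T ty' t' j' -> [/\ ty = ty', t = t' & j = j'].
Proof.
move=> t_lt t'_lt j_lt j'_lt; rewrite /three_col_entry.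
set k := nth 0 _ j; set k' := nth 0 _ j' => eE.
have [tyE tE kE] : [/\ ty = ty', t = t' & k = k'].
  have k_lt : (k < 3)%N by apply: three_col_perm_lt.
  have k'_lt : (k' < 3)%N by apply: three_col_perm_lt.
  clearbody k k'; move: k_lt k'_lt eE; case: k => [|[|[|//]]] _; case: k' => [|[|[|//]]] _;
    by case: ty; case: ty' => /= eE; first [split; lia | exfalso; lia].
by subst ty' t'; split=> //; apply: three_col_perm_inj kE.
Qed.

Definition three_col_block T : 'M[int]_(T + T, 3) :=
  col_mx (\matrix_(t, j) three_col_entry T false t j) (\matrix_(t, j) three_col_entry T true t j).

Lemma three_col_magic_block N T : (1 < T)%N -> magic_block N 0 (3 * T) (three_col_block T).
Proof.
move=> T_gt1.
have half_inj ty : mx_inj (\matrix_(t < T, j < 3) three_col_entry T ty t j).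
  move=> [t j] [t' j'] /=; rewrite !mxE => /three_col_entry_inj.
  by case/(_ (ltn_ord t) (ltn_ord t') (ltn_ord j) (ltn_ord j')) => _ /val_inj -> /val_inj ->.
split.
- by move=> i j; case: (split_ordP i) => [t ->|t ->];
    rewrite ?col_mxEu ?col_mxEd mxE three_col_entry_bound.
- apply: mx_inj_col_mx => // t j t' j'; rewrite !mxE; apply/eqP => /three_col_entry_inj.
  by case/(_ (ltn_ord t) (ltn_ord t') (ltn_ord j) (ltn_ord j')).
- move=> i; suff -> : \sum_j three_col_block T i j = 0 by exact: rpred0.
  case: (split_ordP i) => [t ->|t ->]; under eq_bigr do rewrite ?col_mxEu ?col_mxEd mxE;
    rewrite !big_ord_recr big_ord0 /= /three_col_entry;
    by case: (three_col_class T t) => [|[|[|cl]]] /=; lia.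
- move=> j; suff -> : \sum_i three_col_block T i j = 0 by exact: rpred0.
  rewrite big_split_ord /= -big_split /=; under eq_bigr do rewrite col_mxEu col_mxEd !mxE.
  exact: three_col_colsum.
Qed.

Lemma double_rows_block T n : (1 < T)%N -> (2 < n)%N ->
  exists A : 'M[int]_(T.*2, n), magic_block (2 * (T * n)).+1 0 (T * n) A.
Proof.
move=> T_gt1 n_gt2; have [odd_n | even_n] := boolP (odd n); last first.
  by have := even_width_block 0 T_gt1 even_n; rewrite add0n.
have [B bB] := @even_width_block (3 * T) T (n - 3) T_gt1 ltac:(by rewrite oddB ?odd_n).
have [C bC] : exists C : 'M[int]_(T.*2, 3), magic_block (2 * (T * n)).+1 0 (3 * T) C.
  by rewrite -addnn; exists (three_col_block T); apply: three_col_magic_block.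
have hiE : (3 * T + T * (n - 3) = T * n)%N by nia.
rewrite hiE in bB.
suff : exists A : 'M[int]_(T.*2, 3 + (n - 3)), magic_block (2 * (T * n)).+1 0 (T * n) A.
  by rewrite subnKC.
by exists (row_mx C B); apply: magic_block_row_mx bC bB; nia.
Qed.

Definition int_magic (m n : nat) : Prop :=
  exists A : 'M[int]_(m, n), magic_block (m * n + 1) 0 (m * n)./2 A.

Lemma int_magic_tr m n : int_magic n m -> int_magic m n.
Proof. by case=> A; rewrite [(n * m)%N]mulnC => /magic_block_tr bA; exists A^T. Qed.

Lemma int_magic_two_cols m : (2 < m)%N -> int_magic m 2.
Proof.
move=> m_gt2; have [A bA] := @two_col_block 0 m m_gt2 (fun _ => erefl).
have NE : (2 * (0 + m)).+1 = (m * 2 + 1)%N by lia.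
have hiE : (0 + m)%N = (m * 2)./2 by lia.
by rewrite NE hiE in bA; exists A.
Qed.

Lemma int_magic_even_rows m n : (3 < m)%N -> ~~ odd m -> (2 < n)%N -> int_magic m n.
Proof.
move=> m_gt3 even_m n_gt2; have [T mE] : exists T, m = T.*2 by exists m./2; lia.
subst m; have [A bA] := @double_rows_block T n ltac:(lia) n_gt2.
have NE : (2 * (T * n)).+1 = (T.*2 * n + 1)%N by rewrite -mul2n; lia.
have hiE : (T * n)%N = (T.*2 * n)./2 by rewrite -mul2n -mulnA mul2n doubleK.
by rewrite NE hiE in bA; exists A.
Qed.

Lemma int_magic_pfa m n : (0 < m * n)%N -> ~~ odd (m * n) -> int_magic m n ->
  exists B : 'M[option 'Z_(m * n + 1)]_(m, n),
    @zero_sum_magic_pfa _ (Zstar (m * n + 1)) m n n m B.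
Proof. by move=> mn_gt0 mn_even [A]; apply: magic_block_pfa; lia. Qed.

Section ZeroSumPfa.
Variables (G : finZmodType) (Omega : {set G}) (m n s k : nat) (A : 'M[option G]_(m, n)).
Hypothesis magicA : @zero_sum_magic_pfa _ Omega m n s k A.

Lemma pfa_sum_eq0 : \sum_(x in Omega) x = 0.
Proof.
have [inA [onceA [_ [_ [rowA _]]]]] := magicA.
have -> : \sum_(x in Omega) x = \sum_(x in Omega) \sum_(p | A p.1 p.2 == Some x) x.
  apply: eq_bigr => x /onceA cardx; rewrite sumr_const.
  by rewrite -[X in _ *+ X]cardsE cardx.
rewrite (exchange_big_dep xpredT) //=.
have -> : \sum_p \sum_(x in Omega | A p.1 p.2 == Some x) x = \sum_p odflt 0 (A p.1 p.2).
  apply: eq_bigr => p _; case Ap: (A p.1 p.2) => [y|] /=.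
    rewrite (big_pred1 y) // => x; rewrite (inj_eq Some_inj) eq_sym andb_idl //.
    by move=> /eqP ->; apply: inA Ap.
  by rewrite big_pred0 // => x; rewrite andbF.
by rewrite -(pair_bigA _ (fun i j => odflt 0 (A i j))) big1 // => i _; apply: rowA.
Qed.

Hypothesis rowsA : s = n.

Lemma pfa_filled i j : A i j != None.
Proof.
have [_ [_ [rowA _]]] := magicA.
have /eqP fullr : [set j | A i j != None] == setT.
  by rewrite eqEcard subsetT cardsT card_ord rowA rowsA leqnn.
by have := in_setT j; rewrite -fullr inE.
Qed.

End ZeroSumPfa.

Lemma no_pfa_2x2 (G : finZmodType) (Omega : {set G}) (A : 'M[option G]_(2, 2)) :
  ~ @zero_sum_magic_pfa _ Omega 2 2 2 2 A.
Proof.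
move=> magicA; have [inA [onceA [_ [_ [rowA colA]]]]] := magicA.
have filled := pfa_filled magicA erefl.
have e01 : odflt 0 (A 0 1) = odflt 0 (A 1 0).
  have one : lift ord0 ord0 = 1 :> 'I_2 by apply: val_inj.
  have := rowA 0; have := colA 0; rewrite !big_ord_recl !big_ord0 !addr0 one => c0 r0.
  by apply: (@addrI _ (odflt 0 (A 0 0))); rewrite r0 c0.
case A01: (A 0 1) e01 (filled 0 1) => [x|] //; case A10: (A 1 0) (filled 1 0) => [y|] //= _ exy.
have /eqP/cards1P [p ep] := onceA x (inA _ _ _ A01).
have : ((0, 1) : 'I_2 * 'I_2) \in [set p] by rewrite -ep inE A01.
have : ((1, 0) : 'I_2 * 'I_2) \in [set p] by rewrite -ep inE A10 exy.
by rewrite !inE => /eqP <- /eqP.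
Qed.

Lemma sum_Zp N : (1 < N)%N -> \sum_(x : 'Z_N) x = 'C(N, 2)%:R.
Proof.
case: N => [|[|k]] // _.
rewrite (eq_bigr (fun x : 'Z_k.+2 => (x : nat)%:R)); last by move=> x _; rewrite natr_Zp.
by rewrite -natr_sum -triangular_sum big_mkord.
Qed.

Lemma sum_Zstar N : \sum_(x in Zstar N) x = \sum_(x : 'Z_N) x.
Proof. by rewrite [RHS](bigD1 0) //= add0r; apply: eq_bigl => x; rewrite inE. Qed.

Lemma sum_Zp_neq0 N : (1 < N)%N -> ~~ odd N -> \sum_(x : 'Z_N) x != 0.
Proof.
move=> N_gt1 evenN; rewrite sum_Zp // -(inj_eq val_inj) /= val_Zp_nat // bin2.
have [M eN] : exists M, N = (2 * M)%N by exists N./2; lia.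
rewrite eN in N_gt1 *.
rewrite -mulnA mul2n half_double (_ : (M * (2 * M).-1 = (M - 1) * (2 * M) + M)%N); last by nia.
by rewrite modnMDl modn_small; lia.
Qed.

Lemma pfa_Zstar_necessary m n (A : 'M[option 'Z_(m * n + 1)]_(m, n)) :
  (2 <= m)%N -> (2 <= n)%N -> @zero_sum_magic_pfa _ (Zstar (m * n + 1)) m n n m A ->
  odd (m * n + 1) /\ (5 < m * n + 1)%N.
Proof.
move=> m_ge2 n_ge2 magicA.
have oddN : odd (m * n + 1).
  have N_gt1 : (1 < m * n + 1)%N by nia.
  apply: contraT => evenN; move: (sum_Zp_neq0 N_gt1 evenN).
  by rewrite -sum_Zstar (pfa_sum_eq0 magicA) eqxx.
split=> //; rewrite ltnNge; apply/negP => small.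
have [em en] : m = 2%N /\ n = 2%N by move: oddN; rewrite oddD oddM; nia.
by subst m n; apply: no_pfa_2x2 magicA.
Qed.

Theorem mainTheorem15 (m n : nat) (hm : (2 <= m)%N) (hn : (2 <= n)%N) :
  (exists A : 'M[option 'Z_(m * n + 1)]_(m, n),
      @zero_sum_magic_pfa _ (Zstar (m * n + 1)) m n n m A)
  <-> (odd (m * n + 1) /\ (5 < m * n + 1)%N).
Proof.
split=> [[A] | [odd_N N_gt5]]; first exact: pfa_Zstar_necessary.
have even_mn : ~~ odd (m * n) by move: odd_N; rewrite oddD addbT.
apply: int_magic_pfa => //; first by nia.
have [n2 | n_neq2] := eqVneq n 2%N; first by rewrite n2; apply: int_magic_two_cols; nia.
have [m2 | m_neq2] := eqVneq m 2%N; first by rewrite m2; apply/int_magic_tr/int_magic_two_cols; nia.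
have [odd_m | even_m] := boolP (odd m); last by apply: int_magic_even_rows => //; lia.
have even_n : ~~ odd n by move: even_mn; rewrite oddM odd_m.
by apply/int_magic_tr/int_magic_even_rows => //; lia.
Qed.
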